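(* Let $(p_n)_{n\in\mathbb{N}}$ be a sequence in $(0,1)$ (so $p_n\neq1$ for all $n$) with $\lim_{n\to\infty}p_n=1$, and set $q_n:=(1-p_n)^{-1}$. Consider, for each $n$, the auxiliary process on some connected graph with survival parameter $p_n$, and let $k=k(n)$ be an instant. Let $A_k$ be the number of active particles at the end of round $k$, and let $T(k)$ be the sum of the remaining lifetimes of these $A_k$ particles, i.e. the total number of further steps (rounds in which they participate and survive) that these particles will still take before dying, with $T(k):=0$ if $A_k=0$. Then for every $\epsilon>0$ and $b>0$: (i) $\lim_{n\to\infty}P\big(T(k)\leq(1-\epsilon/2)bnq_n \,\big|\, A_k\leq(1-\epsilon)bn\big)=1$; (ii) $\lim_{n\to\infty}P\big(T(k)\geq(1+\epsilon/2)bnq_n \,\big|\, A_k\geq(1+\epsilon)bn\big)=1$.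
   Context: Auxiliary process on a connected graph $\mathcal{G}=(\mathcal{V},\mathcal{E})$ with root $o$ and survival parameter $p$: each $v\neq o$ initially carries $\eta_v$ inactive particles and $o$ carries $1+\eta_o$ active particles (the $\eta_v$ are nonnegative integer random variables, not necessarily i.i.d.); these are the original particles. At each round $k=1,2,\dots$ exactly one active particle is chosen (by an arbitrary rule) to participate; independently of everything else it survives with probability $p$, in which case it moves to a uniformly chosen neighbouring vertex and activates all inactive particles there, and otherwise it dies and is removed. At the round $R$ at which the last living original active particle dies, all remaining inactive particles are called extra, and a new extra active particle is injected at $o$; afterwards, each time the only living active particle dies, a new extra active particle is injected at $o$. For round $k$ define $X_k=0$ if the participating particle dies; $X_k=1$ if it survives and moves to a previously visited vertex or to a never-visited vertex $v$ with $\eta_v=0$; $X_k=j\geq2$ if it survives and moves to a never-visited vertex $v$ with $\eta_v=j-1$. Set $A'_0=1+\eta_o$, $A'_k=1+\eta_o+\sum_{j=1}^k(X_j-1)$, $R=\inf\{k:A'_k=0\}$, and $A_k=A'_k\mathbf{1}_{\{k<R\}}$ (the number of active particles at the end of round $k$). Conditional probabilities are understood for those $n$ where the conditioning event has positive probability. *)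

From HB Require Import structures.
From mathcomp Require Import all_boot all_order all_algebra.
From mathcomp Require Import all_classical all_reals all_analysis.
From Stdlib Require List.

Set Implicit Arguments.
Unset Strict Implicit.
Unset Printing Implicit Defensive.
Import Order.TTheory GRing.Theory Num.Theory.
Local Open Scope classical_set_scope.
Local Open Scope ring_scope.

(* Original particles are indexed by (home vertex, index):              *)
(*   (v, i) with i < eta v for v <> o, and (o, i) with i < 1 + eta o.    *)
Record pstate (V : eqType) := PState {
  ps_alive : seq (V * nat);
  ps_used : V * nat -> nat;        (* number of rounds a particle participated in *)
  ps_pos : V * nat -> V;
  ps_visited : seq V }.

Section Dynamics.
Variables (V : eqType) (o : V).
(* random inputs, for a fixed outcome omega *)
Variable eta : V -> nat.
(* coin used the m-th time particle x participates: true = survives *)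
Variable B : V * nat -> nat -> bool.
(* neighbour chosen the m-th time particle x participates, when at v *)
Variable N : V * nat -> nat -> V -> V.
(* the (arbitrary, history-dependent) rule choosing the participating
   active particle: index (mod the number of alive particles) into the
   list of living active particles of the current state *)
Variable rule : seq (pstate V) -> nat.

Definition st0 : pstate V :=
  PState [seq (o, i) | i <- iota 0 (eta o).+1] (fun _ => 0%N) (fun x => x.1) [:: o].

Definition step (H : seq (pstate V)) : pstate V :=
  let st := last st0 H in
  match ps_alive st with
  | [::] => st
  | a0 :: _ =>
    let x := nth a0 (ps_alive st) (rule H %% size (ps_alive st)) in
    let m := ps_used st x in
    let used' := fun y => if y == x then m.+1 else ps_used st y in
    if B x m then
      let w := N x m (ps_pos st x) in
      let pos' := fun y => if y == x then w else ps_pos st y in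
      if w \in ps_visited st then PState (ps_alive st) used' pos' (ps_visited st)
      else PState (ps_alive st ++ [seq (w, i) | i <- iota 0 (eta w)])
                  used' pos' (w :: ps_visited st)
    else PState (rem x (ps_alive st)) used' (ps_pos st) (ps_visited st)
  end.

Fixpoint hist (k : nat) : seq (pstate V) :=
  match k with
  | 0 => [:: st0]
  | k'.+1 => rcons (hist k') (step (hist k'))
  end.

Definition state (k : nat) : pstate V := last st0 (hist k).

End Dynamics.

(* number of further survivals of a particle whose coin sequence is f,
   having already participated u times: the index of the first failing
   coin from u on (+oo if it never dies) *)
Definition rem_life (R : realType) (f : nat -> bool) (u : nat) : \bar R :=
  ereal_inf [set (j%:R)%:E | j in [set j : nat | f (u + j)%N = false]].

(* Mutual independence of a family of "components", each component c
   generating the sigma-algebra of the pi-system [events c]. *)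
Definition mutually_indep (d : measure_display) (T : measurableType d)
  (R : realType) (P : probability T R) (C : Type) (events : C -> set (set T)) :=
  forall L : seq (C * set T), List.NoDup (map fst L) ->
    (forall x, List.In x L -> events x.1 x.2) ->
    fine (P [set w | forall x, List.In x L -> x.2 w])
      = \prod_(x <- L) fine (P x.2).

Inductive comp (V : Type) :=
  CEta | CB of V * nat & nat | CN of V * nat & nat & V.
Arguments CEta {V}.

Record aux_setup (R : realType) (p : R) := AuxSetup {
  aV : eqType;
  anbrs : aV -> seq aV;
  aroot : aV;
  nbrs_sym : forall u v, (u \in anbrs v) = (v \in anbrs u);
  nbrs_irr : forall v, v \notin anbrs v;
  nbrs_uniq : forall v, uniq (anbrs v);
  nbrs_nonempty : forall v, anbrs v != [::];
  connected : forall u v, exists s, path (fun a b => b \in anbrs a) u s /\ last u s = v;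
  adisp : measure_display;
  aOmega : measurableType adisp;
  aP : probability aOmega R;
  aeta : aV -> aOmega -> nat;
  aB : aV * nat -> nat -> aOmega -> bool;
  aN : aV * nat -> nat -> aV -> aOmega -> aV;
  arule : seq (pstate aV) -> nat;
  eta_meas : forall v j, measurable [set w | aeta v w = j];
  B_meas : forall x m, measurable [set w | aB x m w];
  N_meas : forall x m v u, measurable [set w | aN x m v w = u];
  B_law : forall x m, aP [set w | aB x m w] = p%:E;
  N_law : forall x m v u, u \in anbrs v ->
    aP [set w | aN x m v w = u] = ((size (anbrs v))%:R^-1)%:E;
  inputs_indep : mutually_indep aP (fun c : comp aV =>
    match c with
    | CEta => [set E | exists (S : seq aV) (a : aV -> nat),
                 E = [set w | forall v, v \in S -> aeta v w = a v]]
    | CB x m => [set E | exists b : bool, E = [set w | aB x m w = b]]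
    | CN x m v => [set E | exists u : aV, E = [set w | aN x m v w = u]]
    end)
}.

Section Observables.
Variables (R : realType) (p : R) (S : aux_setup p).

Definition aux_state (k : nat) (w : aOmega S) : pstate (aV S) :=
  state (aroot S) (fun v => aeta v w) (fun x m => aB x m w)
        (fun x m v => aN x m v w) (@arule _ _ S) k.

Definition auxA (k : nat) (w : aOmega S) : nat := size (ps_alive (aux_state k w)).

Definition auxT (k : nat) (w : aOmega S) : \bar R :=
  (\sum_(x <- ps_alive (aux_state k w))
     rem_life R (fun m => aB x m w) (ps_used (aux_state k w) x))%E.
End Observables.

(* P(E_n | F_n) --> 1 as n --> oo, along the n with P(F_n) > 0 *)
Definition cond_to_one (R : realType) (p : nat -> R)
  (S : forall n, aux_setup (p n)) (E F : forall n, set (aOmega (S n))) : Prop :=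
  forall delta : R, 0 < delta -> exists N0 : nat, forall n, (N0 <= n)%N ->
    (0 < aP (S n) (F n))%E ->
    `| fine (aP (S n) (E n `&` F n)) / fine (aP (S n) (F n)) - 1 | < delta.
Arguments cond_to_one {R p} S E F.
Arguments auxA {R p} S k w.
Arguments auxT {R p} S k w.

(* Up to round [k] the process reads finitely many inputs; this log determines
   the run up to round [k], and the outcomes producing a given log form a
   cylinder event. There are countably many logs, so these cylinders partition
   the sample space. On a cylinder [A_k] is constant, while the remaining
   lifetimes of the [A_k] active particles are read from coins the log has not
   touched: by independence they are i.i.d. geometric, independently of the
   cylinder. Hence, given [A_k = a], [T(k)] is negative binomial with
   parameters [a] and [p], and Chernoff bounds make both deviations in the
   statement have conditional probability [exp (- kappa n)]; the second one
   needs [p_n] close to [1]. *)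

From HB Require Import structures.
From mathcomp Require Import all_boot all_order all_algebra.
From mathcomp Require Import all_classical all_reals all_analysis.
From mathcomp Require Import ring lra zify.
From Stdlib Require FinFun.
Import numFieldNormedType.Exports.
Import Order.TTheory GRing.Theory Num.Theory.
Local Open Scope classical_set_scope.
Local Open Scope ring_scope.
Set Implicit Arguments.
Unset Strict Implicit.
Unset Printing Implicit Defensive.

(** * Determinacy of the run *)

Section Determinacy.
Variables (V : eqType) (o : V) (rule : seq (pstate V) -> nat).

(* The inputs a run has read, each paired with the value read: entries
   [(v, eta v)], [(x, m, B x m)] and [(x, m, v, N x m v)]. *)
Record input_log := InputLog {
  log_eta : seq (V * nat);
  log_coin : seq (V * nat * nat * bool);
  log_nbr : seq (V * nat * nat * V * V) }.

Definition log_cat (a b : input_log) : input_log :=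
  InputLog (log_eta a ++ log_eta b) (log_coin a ++ log_coin b) (log_nbr a ++ log_nbr b).

Section Inputs.
Variables (eta : V -> nat) (B : V * nat -> nat -> bool) (N : V * nat -> nat -> V -> V).

(* [step] of the process, with the rule's choice [r] made explicit. *)
Definition round (r : nat) (st : pstate V) : pstate V :=
  match ps_alive st with
  | [::] => st
  | a0 :: _ =>
    let x := nth a0 (ps_alive st) (r %% size (ps_alive st)) in
    let m := ps_used st x in
    let used' := fun y => if y == x then m.+1 else ps_used st y in
    if B x m then
      let w := N x m (ps_pos st x) in
      let pos' := fun y => if y == x then w else ps_pos st y in
      if w \in ps_visited st then PState (ps_alive st) used' pos' (ps_visited st)
      else PState (ps_alive st ++ [seq (w, i) | i <- iota 0 (eta w)])
                  used' pos' (w :: ps_visited st)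
    else PState (rem x (ps_alive st)) used' (ps_pos st) (ps_visited st)
  end.

Definition round_log (r : nat) (st : pstate V) : input_log :=
  match ps_alive st with
  | [::] => InputLog [::] [::] [::]
  | a0 :: _ =>
    let x := nth a0 (ps_alive st) (r %% size (ps_alive st)) in
    let m := ps_used st x in
    if B x m then
      let w := N x m (ps_pos st x) in
      InputLog (if w \in ps_visited st then [::] else [:: (w, eta w)])
               [:: (x, m, true)] [:: (x, m, ps_pos st x, w)]
    else InputLog [::] [:: (x, m, false)] [::]
  end.

Local Notation hist := (hist o eta B N rule).
Local Notation state := (state o eta B N rule).

Lemma stateS k : state k.+1 = round (rule (hist k)) (state k).
Proof. by rewrite /state /= last_rcons. Qed.

Lemma histS k : hist k.+1 = rcons (hist k) (round (rule (hist k)) (state k)).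
Proof. by []. Qed.

Lemma hist_neq0 k : hist k <> [::].
Proof. by case: k => // k; rewrite histS => /(congr1 size); rewrite size_rcons. Qed.

Fixpoint run_log k : input_log :=
  if k is k'.+1 then log_cat (run_log k') (round_log (rule (hist k')) (state k'))
  else InputLog [:: (o, eta o)] [::] [::].

Lemma run_logS k :
  run_log k.+1 = log_cat (run_log k) (round_log (rule (hist k)) (state k)).
Proof. by []. Qed.

Definition consistent (l : input_log) : bool :=
  [&& all (fun e => eta e.1 == e.2) (log_eta l),
      all (fun c => B c.1.1 c.1.2 == c.2) (log_coin l) &
      all (fun n => N n.1.1.1 n.1.1.2 n.1.2 == n.2) (log_nbr l)].

Lemma consistent_cat a b : consistent (log_cat a b) = consistent a && consistent b.
Proof.
rewrite /consistent /= !all_cat.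
by case: (all _ (log_eta a)) (all _ (log_coin a)) (all _ (log_nbr a))
   (all _ (log_eta b)) (all _ (log_coin b)) (all _ (log_nbr b)) => [] [] [] [] [] [].
Qed.

Lemma consistent_round_log r st : consistent (round_log r st).
Proof.
rewrite /round_log; case: (ps_alive st) => [|a0 l] //=.
case: ifP => hB; last by rewrite /consistent /= hB.
by case: ifP => _; rewrite /consistent /= hB !eqxx.
Qed.

Lemma consistent_run_log k : consistent (run_log k).
Proof.
elim: k => [|k IH] /=; first by rewrite /consistent /= eqxx.
by rewrite consistent_cat IH consistent_round_log.
Qed.

Definition alive_ok (st : pstate V) :=
  uniq (ps_alive st) /\ {in ps_alive st, forall y, y.1 \in ps_visited st}.

(* Future rounds only read coins and neighbour choices absent from the log. *)
Definition log_fresh (st : pstate V) (l : input_log) :=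
  [/\ uniq (map fst (log_coin l)), {in log_coin l, forall c, c.1.2 < ps_used st c.1.1}%N,
      uniq (map fst (log_nbr l)) & {in log_nbr l, forall n, n.1.1.2 < ps_used st n.1.1.1}%N].

Lemma round_alive_ok r st : alive_ok st -> alive_ok (round r st).
Proof.
case=> ua av; rewrite /round.
case Ha: (ps_alive st) => [|a0 l]; first by rewrite /alive_ok Ha.
rewrite -Ha; set x := nth a0 _ _.
case: ifP => _; last by split => [|y /mem_rem /av]; [exact: rem_uniq|].
set w := N x _ _; case: ifP => hw //; split => /=.
- rewrite cat_uniq ua /= map_inj_uniq ?iota_uniq ?andbT; last by move=> i j [].
  by apply/hasPn => y /mapP [i _ ->]; apply/negP => /av /=; rewrite hw.
- move=> y; rewrite mem_cat inE => /orP [/av -> | /mapP [i _ ->]]; first by rewrite orbT.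
  by rewrite eqxx.
Qed.

Lemma round_log_fresh r st l : log_fresh st l ->
  log_fresh (round r st) (log_cat l (round_log r st)).
Proof.
case=> uc cu un nu; rewrite /round /round_log.
case Ha: (ps_alive st) => [|a0 al]; first by split; rewrite /= ?cats0.
rewrite -Ha; set x := nth a0 _ _; set m := ps_used st x.
set used' := fun y => if y == x then m.+1 else ps_used st y.
have used_ge y : (ps_used st y <= used' y)%N by rewrite /used'; case: eqP => [->|].
have coin_uniq b : uniq (map fst (log_coin l ++ [:: (x, m, b)])).
  rewrite map_cat cat_uniq uc /= orbF andbT; apply/mapP => -[c /cu + ceq].
  by rewrite -ceq ltnn.
have coin_used b : {in log_coin l ++ [:: (x, m, b)], forall c, c.1.2 < used' c.1.1}%N.
  move=> c; rewrite mem_cat inE => /orP [/cu h|/eqP -> /=]; last by rewrite /used' eqxx.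
  exact: leq_trans h (used_ge _).
have nbr_used : {in log_nbr l, forall n, n.1.1.2 < used' n.1.1.1}%N.
  by move=> n /nu h; exact: leq_trans h (used_ge _).
case: ifP => _; last by split; rewrite /= ?cats0.
set w := N x m _.
have nbr_uniq : uniq (map fst (log_nbr l ++ [:: (x, m, ps_pos st x, w)])).
  rewrite map_cat cat_uniq un /= orbF andbT; apply/mapP => -[n /nu + neq].
  by rewrite -neq ltnn.
have nbr_used' : {in log_nbr l ++ [:: (x, m, ps_pos st x, w)],
    forall n, n.1.1.2 < used' n.1.1.1}%N.
  move=> n; rewrite mem_cat inE => /orP [/nbr_used //|/eqP -> /=].
  by rewrite /used' eqxx.
by case: ifP => _; split; rewrite /= ?cats0;
  first [exact: coin_uniq | exact: coin_used | exact: nbr_uniq | exact: nbr_used'].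
Qed.

Lemma run_log_fresh k : alive_ok (state k) /\ log_fresh (state k) (run_log k).
Proof.
elim: k => [|k [IHa IHf]].
  rewrite /state /=; split; split => //.
  - by rewrite map_inj_uniq ?iota_uniq // => i j [].
  - by move=> y /mapP [i _ ->]; rewrite inE.
by rewrite stateS; split; [exact: round_alive_ok | exact: round_log_fresh].
Qed.

End Inputs.

Section TwoInputs.
Variables (eta eta' : V -> nat) (B B' : V * nat -> nat -> bool)
  (N N' : V * nat -> nat -> V -> V).

Lemma round_consistent r st : consistent eta' B' N' (round_log eta B N r st) ->
  round eta' B' N' r st = round eta B N r st /\
  round_log eta' B' N' r st = round_log eta B N r st.
Proof.
rewrite /round /round_log; case: (ps_alive st) => [|a0 l] //.
set x := nth _ _ _; rewrite /consistent /=.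
case: ifP => hB; last by rewrite /= !andbT => /eqP ->.
case: ifP => hw; rewrite /= ?andbT.
  by case/andP => /eqP -> /eqP ->; rewrite hw.
by case/and3P => /eqP he /eqP -> /eqP ->; rewrite hw he.
Qed.

Lemma run_log_consistent k : consistent eta' B' N' (run_log eta B N k) ->
  hist o eta' B' N' rule k = hist o eta B N rule k /\
  run_log eta' B' N' k = run_log eta B N k.
Proof.
elim: k => [|k IH].
  by rewrite /consistent /= andbT => /andP [/eqP h _]; rewrite /= /st0 h.
rewrite run_logS consistent_cat => /andP [/IH [hh hl] /round_consistent [hr hrl]].
have hs : state o eta' B' N' rule k = state o eta B N rule k.
  rewrite /state hh; case: (hist o eta B N rule k) (@hist_neq0 eta B N k) => //.
by rewrite !histS !run_logS hh hs hr hl hrl.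
Qed.

Lemma run_log_consistent_state k : consistent eta' B' N' (run_log eta B N k) ->
  state o eta' B' N' rule k = state o eta B N rule k.
Proof.
move=> /run_log_consistent [hh _]; rewrite /state hh.
by case: (hist o eta B N rule k) (@hist_neq0 eta B N k).
Qed.

End TwoInputs.
End Determinacy.

(** * Cylinder events and independence *)

Section Countable.
Variables (R : realType) (p : R) (S : aux_setup p).
Local Notation V := (aV S).

Definition nbr_walk (u : V) (l : seq nat) : V :=
  foldl (fun v i => nth v (anbrs v) i) u l.

Lemma nbr_walk_path (u : V) s : path (fun a b => b \in anbrs a) u s ->
  exists l, nbr_walk u l = last u s.
Proof.
elim: s u => [|b s IH] u /=; first by exists [::].
case/andP => hb /IH [l hl]; exists (index b (anbrs u) :: l).
by rewrite /nbr_walk /= nth_index.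
Qed.

Lemma nbr_walk_surj (v : V) : exists l, nbr_walk (aroot S) l == v.
Proof.
have [s [/nbr_walk_path [l hl] <-]] := connected (aroot S) v.
by exists l; rewrite hl.
Qed.

(* By connectivity every vertex is reached by a walk from the root, so vertices,
   and hence logs, can be coded by natural numbers. *)
Definition vertex_code (v : V) : nat := pickle (xchoose (nbr_walk_surj v)).

Lemma vertex_code_inj : injective vertex_code.
Proof.
move=> v w /(pcan_inj pickleK) h.
by rewrite -(eqP (xchooseP (nbr_walk_surj v))) -(eqP (xchooseP (nbr_walk_surj w))) h.
Qed.

Definition log_code (l : input_log V) : nat :=
  pickle ([seq (vertex_code e.1, e.2) | e <- log_eta l],
          [seq (vertex_code c.1.1.1, c.1.1.2, c.1.2, c.2) | c <- log_coin l],
          [seq (vertex_code n.1.1.1.1, n.1.1.1.2, n.1.1.2, vertex_code n.1.2,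
                vertex_code n.2) | n <- log_nbr l]).

Lemma log_code_inj : injective log_code.
Proof.
move=> [a1 b1 c1] [a2 b2 c2] /(pcan_inj pickleK) [ha hb hc].
congr InputLog.
- by apply: inj_map ha => -[v i] [v' i'] [/vertex_code_inj -> ->].
- by apply: inj_map hb => -[[[v i] j] b] [[[v' i'] j'] b'] [/vertex_code_inj -> -> -> ->].
- apply: inj_map hc => -[[[[v i] j] y] z] [[[[v' i'] j'] y'] z'].
  by case=> /vertex_code_inj -> -> -> /vertex_code_inj -> /vertex_code_inj ->.
Qed.

End Countable.

Lemma List_In_mem (T : eqType) (x : T) (l : seq T) : List.In x l <-> x \in l.
Proof.
elim: l => [|y l IH] //=; rewrite inE; split.
  by case=> [->|/IH ->]; rewrite ?eqxx ?orbT.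
by case/orP => [/eqP ->|/IH]; [left|right].
Qed.

Lemma uniq_NoDup (T : eqType) (l : seq T) : uniq l -> List.NoDup l.
Proof.
elim: l => [|x l IH] /=; first by constructor.
by case/andP => hx /IH; constructor => //; rewrite List_In_mem; exact/negP.
Qed.

Section Cylinders.
Variables (R : realType) (p : R) (S : aux_setup p).
Local Notation V := (aV S).
Local Notation Om := (aOmega S).
Local Notation P := (aP S).

Definition coin_prob (b : bool) : R := if b then p else 1 - p.

Definition coin_event (cs : seq (V * nat * nat * bool)) : set Om :=
  [set w | all (fun c => aB c.1.1 c.1.2 w == c.2) cs].

Definition nbr_event (ns : seq (V * nat * nat * V * V)) : set Om :=
  [set w | all (fun n => aN n.1.1.1 n.1.1.2 n.1.2 w == n.2) ns].

Definition eta_event (E : set Om) := exists (Sv : seq V) (a : V -> nat),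
  E = [set w | forall v, v \in Sv -> aeta v w = a v].

Definition cyl (E : set Om) cs ns := E `&` coin_event cs `&` nbr_event ns.

Lemma measurable_all (T : Type) (f : T -> Om -> bool) (l : seq T) :
  (forall c, measurable [set w | f c w]) -> measurable [set w | all (f^~ w) l].
Proof.
move=> hf; elim: l => [|c l IH] /=.
  by rewrite (_ : [set _ | _] = setT) //; apply/seteqP.
rewrite (_ : [set _ | _] = [set w | f c w] `&` [set w | all (f^~ w) l]).
  exact: measurableI.
by apply/seteqP; split => w /=; [case/andP | case=> *; apply/andP].
Qed.

Lemma measurable_eta_event E : eta_event E -> measurable E.
Proof.
case=> Sv [a ->].
rewrite (_ : [set _ | _] = [set w | all (fun v => aeta v w == a v) Sv]).
  apply: (@measurable_all _ (fun v w => aeta v w == a v)) => v.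
  rewrite (_ : [set _ | _] = [set w | aeta v w = a v]); first exact: eta_meas.
  by apply/seteqP; split => w /eqP.
by apply/seteqP; split => w /= h; [apply/allP => v /h ->|move=> v /(allP h) /eqP].
Qed.

Lemma measurable_coin x m b : measurable [set w : Om | aB x m w == b].
Proof.
case: b.
  rewrite (_ : [set _ | _] = [set w | aB x m w]); first exact: B_meas.
  by apply/seteqP; split => w /=; rewrite eqb_id.
rewrite (_ : [set _ | _] = ~` [set w | aB x m w]); first exact/measurableC/B_meas.
by apply/seteqP; split => w /=; rewrite eqbF_neg => /negP.
Qed.

Lemma measurable_cyl E cs ns : eta_event E -> measurable (cyl E cs ns).
Proof.
move=> hE; apply: measurableI; first apply: measurableI.
- exact: measurable_eta_event.
- apply: (@measurable_all _ (fun c w => aB c.1.1 c.1.2 w == c.2)) => c.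
  exact: measurable_coin.
- apply: (@measurable_all _ (fun n w => aN n.1.1.1 n.1.1.2 n.1.2 w == n.2)) => n.
  rewrite (_ : [set _ | _] = [set w | aN n.1.1.1 n.1.1.2 n.1.2 w = n.2]).
    exact: N_meas.
  by apply/seteqP; split => w /eqP.
Qed.

Lemma coin_law x m b : fine (P [set w | aB x m w = b]) = coin_prob b.
Proof.
case: b; first by rewrite B_law.
rewrite (_ : [set _ | _] = ~` [set w | aB x m w]).
  by rewrite probability_setC ?B_law //; exact: B_meas.
by apply/seteqP; split => w /=; [move=> -> | case: (aB x m w)].
Qed.

Definition indep_class (c : comp V) : set (set Om) :=
  match c with
  | CEta => [set E | exists (S : seq V) (a : V -> nat),
               E = [set w | forall v, v \in S -> aeta v w = a v]]
  | CB x m => [set E | exists b : bool, E = [set w | aB x m w = b]]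
  | CN x m v => [set E | exists u : V, E = [set w | aN x m v w = u]]
  end.

(* [cyl E cs ns] as an intersection of events of distinct components of
   [inputs_indep]. *)
Definition cyl_family (E : set Om) cs ns : seq (comp V * set Om) :=
  (CEta, E) :: ([seq (CB c.1.1 c.1.2, [set w | aB c.1.1 c.1.2 w = c.2]) | c <- cs] ++
                [seq (CN n.1.1.1 n.1.1.2 n.1.2, [set w | aN n.1.1.1 n.1.1.2 n.1.2 w = n.2])
                | n <- ns]).

Lemma cyl_family_NoDup E cs ns : uniq (map fst cs) -> uniq (map fst ns) ->
  List.NoDup (map fst (cyl_family E cs ns)).
Proof.
move=> uc un; rewrite /= map_cat -!map_comp.
rewrite (eq_map (_ : _ =1 (fun k => CB k.1 k.2) \o fst)) //.
rewrite (eq_map (_ : _ =1 (fun k => CN k.1.1 k.1.2 k.2) \o fst)) // !map_comp.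
constructor; first by case/List.in_app_iff => /List.in_map_iff [? []].
apply: List.NoDup_app.
- apply: FinFun.Injective_map_NoDup; last exact: uniq_NoDup.
  by move=> [? ?] [? ?] [-> ->].
- apply: FinFun.Injective_map_NoDup; last exact: uniq_NoDup.
  by move=> [[? ?] ?] [[? ?] ?] [-> -> ->].
- by move=> _ /List.in_map_iff [? [<- _]] /List.in_map_iff [? []].
Qed.

Lemma cyl_family_class E cs ns : eta_event E ->
  forall x, List.In x (cyl_family E cs ns) -> indep_class x.1 x.2.
Proof.
move=> hE x /= [<- //|/List.in_app_iff [] /List.in_map_iff [c [<- _]]].
- by exists c.2.
- by exists c.2.
Qed.

Lemma cyl_familyE E cs ns :
  [set w | forall x, List.In x (cyl_family E cs ns) -> x.2 w] = cyl E cs ns.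
Proof.
apply/seteqP; split => w /=.
  move=> h; split; first split.
  - by apply: (h (CEta, E)); left.
  - apply/allP => c /List_In_mem hc; apply/eqP.
    apply: (h (CB c.1.1 c.1.2, [set w | aB c.1.1 c.1.2 w = c.2])); right.
    by apply/List.in_app_iff; left; apply/List.in_map_iff; exists c.
  - apply/allP => n /List_In_mem hn; apply/eqP.
    apply: (h (CN n.1.1.1 n.1.1.2 n.1.2, [set w | aN n.1.1.1 n.1.1.2 n.1.2 w = n.2])).
    by right; apply/List.in_app_iff; right; apply/List.in_map_iff; exists n.
case=> [[hw /allP hc] /allP hn] x [<- //|/List.in_app_iff []] /List.in_map_iff.
- by case=> c [<- /List_In_mem /hc /eqP].
- by case=> n [<- /List_In_mem /hn /eqP].
Qed.

Lemma measure_cyl E cs ns : eta_event E -> uniq (map fst cs) -> uniq (map fst ns) ->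
  fine (P (cyl E cs ns)) = fine (P E) * \prod_(c <- cs) coin_prob c.2 *
     \prod_(n <- ns) fine (P [set w | aN n.1.1.1 n.1.1.2 n.1.2 w = n.2]).
Proof.
move=> hE uc un.
have := inputs_indep (cyl_family_NoDup E uc un) (cyl_family_class hE).
rewrite cyl_familyE => ->; rewrite big_cons big_cat /= !big_map -mulrA.
congr (_ * _); congr (_ * _).
by apply: eq_bigr => c _; exact: coin_law.
Qed.

Lemma measure_cyl_cat E cs cs' ns : eta_event E ->
  uniq (map fst (cs ++ cs')) -> uniq (map fst ns) ->
  fine (P (cyl E (cs ++ cs') ns)) = fine (P (cyl E cs ns)) * \prod_(c <- cs') coin_prob c.2.
Proof.
move=> hE hu hn; have uc : uniq (map fst cs) by move: hu; rewrite map_cat cat_uniq => /andP [].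
rewrite !measure_cyl // big_cat /= -!mulrA.
by congr (_ * _); congr (_ * _); exact: mulrC.
Qed.

Lemma measure_cylE E cs ns : eta_event E -> P (cyl E cs ns) = (fine (P (cyl E cs ns)))%:E.
Proof. by move=> hE; rewrite fineK // fin_num_measure //; exact: measurable_cyl. Qed.

End Cylinders.

(** * Remaining lifetimes on a cylinder *)

Section RemainingLife.
Variable R : realType.
Local Open Scope ereal_scope.

Lemma rem_life_eq (f : nat -> bool) u j : f (u + j)%N = false ->
  (forall i, (i < j)%N -> f (u + i)%N) -> rem_life R f u = j%:R%:E.
Proof.
move=> hj hi; apply/le_anti/andP; split; first by apply: ereal_inf_lbound; exists j.
apply/ereal_infP => _ [i /= hfi <-]; rewrite lee_fin ler_nat leqNgt.
by apply/negP => /hi; rewrite hfi.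
Qed.

Lemma rem_life_ge0 (f : nat -> bool) u : 0 <= rem_life R f u.
Proof. by apply/ereal_infP => _ [i _ <-]; rewrite lee_fin. Qed.

Lemma rem_lifeP (f : nat -> bool) u :
  (exists j, [/\ f (u + j)%N = false, forall i, (i < j)%N -> f (u + i)%N
      & rem_life R f u = j%:R%:E]) \/ rem_life R f u = +oo.
Proof.
case: (pselect (exists j, ~~ f (u + j)%N)) => [ex|nex].
  left; case: (ex_minnP ex) => j /negbTE hj hmin; exists j.
  have hi i : (i < j)%N -> f (u + i)%N.
    by move=> hij; apply/negPn/negP => /hmin; rewrite leqNgt hij.
  by split => //; exact: rem_life_eq.
right; rewrite /rem_life (_ : [set _ | _ in _] = set0) ?ereal_inf0 //.
by apply/seteqP; split => // _ [j /= hj _]; apply: nex; exists j; rewrite hj.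
Qed.

Lemma rem_life_natP (f : nat -> bool) u j : rem_life R f u = j%:R%:E ->
  f (u + j)%N = false /\ (forall i, (i < j)%N -> f (u + i)%N).
Proof.
case: (rem_lifeP f u) => [[j' [h1 h2 ->]] | ->] // /eqP.
by rewrite eqe eqr_nat => /eqP <-.
Qed.

End RemainingLife.

(* [negbin_cdf p a t] is the probability that a sum of [a] independent
   geometric variables of law [P(= j) = p ^ j (1 - p)] is at most [t]. *)
Fixpoint negbin_cdf (R : pzRingType) (p : R) (a t : nat) : R :=
  if a is a'.+1 then \sum_(j < t.+1) p ^+ j * (1 - p) * negbin_cdf p a' (t - j) else 1.

Section Lifetimes.
Variables (R : realType) (p : R) (S : aux_setup p).
Local Notation V := (aV S).
Local Notation Om := (aOmega S).
Local Notation P := (aP S).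

Definition lifetime_sum (s : seq (V * nat)) (u : V * nat -> nat) (w : Om) : \bar R :=
  (\sum_(x <- s) rem_life R (fun m => aB x m w) (u x))%E.

Definition lifetime_sum_le s u (t : nat) := [set w | (lifetime_sum s u w <= t%:R%:E)%E].

Definition death_coins (x : V * nat) (u : V * nat -> nat) (j : nat) :=
  [seq (x, (u x + i)%N, true) | i <- iota 0 j] ++ [:: (x, (u x + j)%N, false)].

Lemma lifetime_sum_ge0 s u w : (0 <= lifetime_sum s u w)%E.
Proof. by apply: sume_ge0 => x _; exact: rem_life_ge0. Qed.

Lemma coin_event_cat (cs cs' : seq (V * nat * nat * bool)) :
  coin_event (cs ++ cs') = coin_event cs `&` coin_event cs'.
Proof. by apply/seteqP; split => w /=; rewrite /coin_event /= all_cat => /andP. Qed.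

Lemma cyl_cat (E : set Om) cs cs' ns : cyl E (cs ++ cs') ns = cyl E cs ns `&` coin_event cs'.
Proof. by rewrite /cyl coin_event_cat; apply/seteqP; split => w /=; tauto. Qed.

Lemma coin_event_death_coins w x u j :
  coin_event (death_coins x u j) w <-> rem_life R (fun m => aB x m w) (u x) = j%:R%:E.
Proof.
rewrite /coin_event /death_coins /= all_cat /= andbT; split.
  case/andP => /allP h1 /eqP h2; apply: rem_life_eq => // i hi.
  by apply/eqP; apply: (h1 (x, (u x + i)%N, true)); apply/mapP; exists i; rewrite ?mem_iota.
move/rem_life_natP => [-> h2]; rewrite eqxx andbT.
by apply/allP => c /mapP [i]; rewrite mem_iota => /andP [_ /h2 hi] -> /=; rewrite hi.
Qed.

Lemma prod_death_coins x u j :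
  \prod_(c <- death_coins x u j) coin_prob p c.2 = p ^+ j * (1 - p).
Proof.
rewrite big_cat big_map big_seq1 /=.
by rewrite (_ : iota 0 j = index_iota 0 j) ?prodr_const_nat ?subn0 // /index_iota subn0.
Qed.

Lemma death_coins_fresh x u j cs : uniq (map fst cs) ->
  {in cs, forall c, c.1.1 = x -> c.1.2 < u x}%N ->
  uniq (map fst (cs ++ death_coins x u j)).
Proof.
move=> uc hc; rewrite map_cat cat_uniq uc /=.
have -> : map fst (death_coins x u j) = [seq (x, (u x + i)%N) | i <- iota 0 j.+1].
  by rewrite /death_coins map_cat -map_comp -addn1 iotaD map_cat.
rewrite map_inj_uniq ?iota_uniq ?andbT; last by move=> i i' [/addnI].
apply/hasPn => _ /mapP [i _ ->]; apply/negP => /mapP [c /hc + ce].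
by rewrite -ce /= => /(_ erefl); rewrite ltnNge leq_addr.
Qed.

Lemma cyl_lifetime_sum_le_cons E cs ns x s u t :
  cyl E cs ns `&` lifetime_sum_le (x :: s) u t =
  \big[setU/set0]_(j < t.+1)
     (cyl E (cs ++ death_coins x u j) ns `&` lifetime_sum_le s u (t - j)).
Proof.
rewrite -(bigcup_mkord _ (fun j =>
  cyl E (cs ++ death_coins x u j) ns `&` lifetime_sum_le s u (t - j))).
apply/seteqP; split => w /=.
  case=> hcyl; rewrite /lifetime_sum_le /lifetime_sum /= big_cons.
  have hT := lifetime_sum_ge0 s u w; rewrite /lifetime_sum in hT.
  case: (rem_lifeP R (fun m => aB x m w) (u x)) => [[j [_ _ hj]]|->]; last first.
    by rewrite addye ?leye_eq //; apply/negP => /eqP h; move: hT; rewrite h.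
  rewrite hj; move: hT; case hs: (\sum_(y <- s) _)%E => [r| |] //.
  rewrite -EFinD !lee_fin => r0 hjr.
  have jt : (j <= t)%N by rewrite -(ler_nat R); lra.
  exists j => //; split; first by rewrite cyl_cat; split => //; apply/coin_event_death_coins.
  by rewrite /lifetime_sum_le /lifetime_sum /= hs lee_fin natrB //; lra.
case=> j /= jt []; rewrite cyl_cat => -[hcyl /coin_event_death_coins hr] hT.
split => //; rewrite /lifetime_sum_le /lifetime_sum /= big_cons hr.
move: hT (lifetime_sum_ge0 s u w); rewrite /lifetime_sum_le /lifetime_sum /=.
by case: (\sum_(y <- s) _)%E => [r| |] //; rewrite !lee_fin natrB // => h1 h2; lra.
Qed.

(* Lifetimes of distinct particles after their participations so far are read
   from coins not constrained by the cylinder, hence independent of it. *)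
Lemma measure_cyl_lifetime_sum_le s u E cs ns t :
  eta_event E -> uniq s -> uniq (map fst cs) -> uniq (map fst ns) ->
  {in cs, forall c, c.1.1 \in s -> c.1.2 < u c.1.1}%N ->
  measurable (cyl E cs ns `&` lifetime_sum_le s u t) /\
  P (cyl E cs ns `&` lifetime_sum_le s u t) =
    (fine (P (cyl E cs ns)) * negbin_cdf p (size s) t)%:E.
Proof.
move=> hE; elim: s cs t => [|x s IH] cs t us uc un hc.
  have -> : cyl E cs ns `&` lifetime_sum_le [::] u t = cyl E cs ns.
    apply/seteqP; split => w /=; first by case.
    by move=> h; split => //; rewrite /lifetime_sum_le /lifetime_sum /= big_nil lee_fin.
  by split; [exact: measurable_cyl | rewrite /= mulr1 -measure_cylE].
move: us => /= /andP [xs us].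
have fresh j : uniq (map fst (cs ++ death_coins x u j)).
  apply: death_coins_fresh => // c hcs hx.
  by rewrite -hx; apply: hc; rewrite // hx inE eqxx.
pose F j := cyl E (cs ++ death_coins x u j) ns `&` lifetime_sum_le s u (t - j).
have IHj j : measurable (F j) /\
    P (F j) = (fine (P (cyl E (cs ++ death_coins x u j) ns)) * negbin_cdf p (size s) (t - j))%:E.
  apply: IH => // c; rewrite mem_cat => /orP [hcs hcx|].
    by apply: hc; rewrite // inE hcx orbT.
  rewrite /death_coins mem_cat inE => /orP [/mapP [i _ ->]|/eqP ->] /= hx;
    by move: xs; rewrite hx.
rewrite cyl_lifetime_sum_le_cons; split.
  by apply: bigsetU_measurable => j _; case: (IHj j).
rewrite (measure_bigsetU_ord P xpredT (F := fun j : 'I_t.+1 => F j)).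
- rewrite (eq_bigr (fun j : 'I_t.+1 => (fine (P (cyl E cs ns)) *
      (p ^+ j * (1 - p) * negbin_cdf p (size s) (t - j)))%:E)); last first.
    by move=> j _ /=; rewrite (proj2 (IHj j)) measure_cyl_cat // prod_death_coins !mulrA.
  by rewrite sumEFin /= mulr_sumr.
- by move=> j; case: (IHj j).
- move=> i j _ _ [w [[]]]; rewrite cyl_cat => -[_ /coin_event_death_coins hi] _ [].
  rewrite cyl_cat => -[_ /coin_event_death_coins]; rewrite hi => -[] /eqP.
  by rewrite eqr_nat => /eqP /val_inj.
Qed.

End Lifetimes.

(** * Conditioning on the number of active particles *)

Lemma bigcup_partition_setI (T : Type) (piece : nat -> set T) (X : set T) :
  (forall w, exists i, piece i w) -> X = \bigcup_(i in [set: nat]) (piece i `&` X).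
Proof.
move=> cover; apply/seteqP; split => [w Xw|w [i _ []] //].
by have [i hi] := cover w; exists i.
Qed.

Lemma le_measure_partition d (T : measurableType d) (R : realType)
    (mu : {measure set T -> \bar R}) (piece : nat -> set T) (X Y : set T) (c : R) :
  0 <= c -> (forall i j w, piece i w -> piece j w -> i = j) ->
  (forall w, exists i, piece i w) ->
  (forall i, measurable (piece i `&` X)) -> (forall i, measurable (piece i `&` Y)) ->
  (forall i, (mu (piece i `&` Y) <= c%:E * mu (piece i `&` X))%E) ->
  (mu Y <= c%:E * mu X)%E.
Proof.
move=> c0 disj cover mX mY hle.
have triv Z : trivIset [set: nat] (fun i => piece i `&` Z).
  by move=> i j _ _ [w [[hi _] [hj _]]]; exact: disj hi hj.
rewrite (bigcup_partition_setI Y cover) (bigcup_partition_setI X cover).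
rewrite !measure_bigcup //.
rewrite -nneseriesZl; last by move=> i _; exact: measure_ge0.
by apply: lee_nneseries => i _ => [_|]; [exact: measure_ge0 | exact: hle].
Qed.

Lemma measurable_partition d (T : measurableType d) (piece : nat -> set T) (X : set T) :
  (forall w, exists i, piece i w) -> (forall i, measurable (piece i `&` X)) -> measurable X.
Proof.
move=> cover mX; rewrite (bigcup_partition_setI X cover).
by apply: bigcup_measurable => i _; exact: mX.
Qed.

Section Pieces.
Variables (R : realType) (p : R) (S : aux_setup p) (k : nat).
Local Notation V := (aV S).
Local Notation Om := (aOmega S).
Local Notation P := (aP S).
Local Notation consistent_at w :=
  (consistent (fun v => aeta v w) (fun x m => aB x m w) (fun x m v => aN x m v w)).

Definition log_at (w : Om) : input_log V :=
  run_log (aroot S) (@arule _ _ S)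
    (fun v => aeta v w) (fun x m => aB x m w) (fun x m v => aN x m v w) k.

Definition log_cyl (w0 : Om) : set Om :=
  cyl [set w | forall v, v \in map fst (log_eta (log_at w0)) -> aeta v w = aeta v w0]
      (log_coin (log_at w0)) (log_nbr (log_at w0)).

Lemma log_cylP w0 w : log_cyl w0 w <-> consistent_at w (log_at w0).
Proof.
have := consistent_run_log (aroot S) (@arule _ _ S)
  (fun v => aeta v w0) (fun x m => aB x m w0) (fun x m v => aN x m v w0) k.
rewrite /consistent -/(log_at w0) => /and3P [h0 _ _]; split.
  case=> [[he hc] hn]; apply/and3P; split => //.
  apply/allP => e he'; rewrite he; last by apply/mapP; exists e.
  exact: (allP h0).
case/and3P => h1 h2 h3; split => //; split => // v /mapP [e he ->].
by move: (allP h0 e he) (allP h1 e he) => /eqP -> /eqP.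
Qed.

Lemma log_cyl_state w0 w : log_cyl w0 w -> @aux_state _ _ S k w = @aux_state _ _ S k w0.
Proof. by move/log_cylP; exact: run_log_consistent_state. Qed.

Lemma measurable_log_cyl w0 : measurable (log_cyl w0).
Proof. by apply: measurable_cyl; do 2 eexists. Qed.

Definition piece (i : nat) : set Om := [set w | log_code (log_at w) = i].

Lemma pieceP i : piece i = set0 \/ exists w0, piece i = log_cyl w0.
Proof.
case: (pselect (exists w0, piece i w0)) => [[w0 h0]|h]; last first.
  by left; apply/seteqP; split => w // hw; apply: h; exists w.
right; exists w0; apply/seteqP; split => w /=.
  rewrite -h0 => /log_code_inj hw; apply/log_cylP; rewrite -hw.
  exact: consistent_run_log.
case/log_cylP/run_log_consistent => _ hw.
by rewrite -h0; congr log_code; exact: hw.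
Qed.

Lemma piece_disj i j w : piece i w -> piece j w -> i = j.
Proof. by move=> <- <-. Qed.

Lemma piece_cover w : exists i, piece i w.
Proof. by exists (log_code (log_at w)). Qed.

Lemma measure_log_cyl_auxT_le w0 t :
  measurable (log_cyl w0 `&` [set w | (auxT S k w <= t%:R%:E)%E]) /\
  P (log_cyl w0 `&` [set w | (auxT S k w <= t%:R%:E)%E]) =
    (fine (P (log_cyl w0)) * negbin_cdf p (auxA S k w0) t)%:E.
Proof.
set st := @aux_state _ _ S k w0.
have -> : log_cyl w0 `&` [set w | (auxT S k w <= t%:R%:E)%E] =
    log_cyl w0 `&` lifetime_sum_le (ps_alive st) (ps_used st) t.
  by apply/seteqP; split => w /= [hc h]; split => //; move: h;
    rewrite /auxT /lifetime_sum_le /lifetime_sum /= (log_cyl_state hc).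
have [[ua _] [uc cu un _]] := run_log_fresh (aroot S) (@arule _ _ S)
  (fun v => aeta v w0) (fun x m => aB x m w0) (fun x m v => aN x m v w0) k.
apply: measure_cyl_lifetime_sum_le => //; first by do 2 eexists.
by move=> c hc _; exact: cu.
Qed.

Lemma measurable_piece i : measurable (piece i).
Proof.
by case: (pieceP i) => [->|[w0 ->]]; [exact: measurable0 | exact: measurable_log_cyl].
Qed.

Lemma log_cyl_auxA w0 w : log_cyl w0 w -> auxA S k w = auxA S k w0.
Proof. by move=> h; rewrite /auxA (log_cyl_state h). Qed.

Lemma measurable_auxA_pred (Fp : pred nat) : measurable [set w | Fp (auxA S k w)].
Proof.
apply: (measurable_partition piece_cover) => i.
case: (pieceP i) => [->|[w0 ->]]; first by rewrite set0I.
case hF: (Fp (auxA S k w0)).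
  rewrite (_ : _ `&` _ = log_cyl w0); first exact: measurable_log_cyl.
  by apply/seteqP; split => [w []//|w h]; split; rewrite //= (log_cyl_auxA h).
rewrite (_ : _ `&` _ = set0) //; apply/seteqP; split => w //= [h].
by rewrite (log_cyl_auxA h) hF.
Qed.

Lemma measurable_auxT_le t : measurable [set w | (auxT S k w <= t%:R%:E)%E].
Proof.
apply: (measurable_partition piece_cover) => i.
case: (pieceP i) => [->|[w0 ->]]; first by rewrite set0I.
exact: (measure_log_cyl_auxT_le w0 t).1.
Qed.

Lemma measure_log_cyl_auxT_gt w0 t :
  P (log_cyl w0 `&` ~` [set w | (auxT S k w <= t%:R%:E)%E]) =
    (fine (P (log_cyl w0)) * (1 - negbin_cdf p (auxA S k w0) t))%:E.
Proof.
have [mT hT] := measure_log_cyl_auxT_le w0 t.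
have mC := measurable_log_cyl w0.
rewrite (_ : _ `&` _ = log_cyl w0 `\` (log_cyl w0 `&` [set w | (auxT S k w <= t%:R%:E)%E])).
  rewrite measureD //; last by rewrite -ge0_fin_numE ?measure_ge0 // fin_num_measure.
  change ((P (log_cyl w0) -
    P (log_cyl w0 `&` (log_cyl w0 `&` [set w | (auxT S k w <= t%:R%:E)%E])))%E =
    (fine (P (log_cyl w0)) * (1 - negbin_cdf p (auxA S k w0) t))%:E).
  rewrite setIA setIid hT -[P (log_cyl w0)]fineK ?fin_num_measure //.
  by rewrite -EFinB mulrBr mulr1.
apply/seteqP; split => w /= [h1 h2]; split => //; first by case.
by move=> hT'; apply: h2.
Qed.

(* [auxA S k] is constant on each cylinder [log_cyl w0], and these cylinders
   partition the sample space. *)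
Lemma le_measure_auxA_pred (Y : set Om) (h : nat -> R) (Fp : pred nat) (g : R) :
  0 <= g -> measurable Y ->
  (forall w0, P (log_cyl w0 `&` Y) = (fine (P (log_cyl w0)) * h (auxA S k w0))%:E) ->
  (forall a, Fp a -> h a <= g) ->
  (P ([set w | Fp (auxA S k w)] `&` Y) <= g%:E * P [set w | Fp (auxA S k w)])%E.
Proof.
move=> g0 mY hY hg; set F := [set w | _].
have mF : measurable F := measurable_auxA_pred Fp.
suff hle i : (P (piece i `&` (F `&` Y)) <= g%:E * P (piece i `&` F))%E.
  apply: (le_measure_partition g0 piece_disj piece_cover _ _ hle) => i.
    exact: measurableI (measurable_piece i) mF.
  by apply: measurableI; [exact: measurable_piece | exact: measurableI].
case: (pieceP i) => [->|[w0 ->]]; first by rewrite !set0I measure0 mule0.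
rewrite setIA; case hF: (Fp (auxA S k w0)).
  have -> : log_cyl w0 `&` F = log_cyl w0.
    by apply/seteqP; split => [w []//|w hw]; split; rewrite //= /F /= (log_cyl_auxA hw).
  rewrite hY -[P (log_cyl w0)]fineK ?fin_num_measure //; last exact: measurable_log_cyl.
  rewrite -EFinM lee_fin mulrC; apply: ler_wpM2r; last by apply: hg.
  exact: fine_ge0 (measure_ge0 _ _).
have -> : log_cyl w0 `&` F = set0.
  by apply/seteqP; split => w //= [hw]; rewrite /F /= (log_cyl_auxA hw) hF.
by rewrite set0I measure0 mule0.
Qed.

End Pieces.

(** * Chernoff bounds for the negative binomial law *)

Lemma mul1B_sum_expr (R : comPzRingType) (y : R) n :
  (1 - y) * \sum_(j < n) y ^+ j = 1 - y ^+ n.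
Proof. by rewrite -opprB mulNr -subrX1 opprB. Qed.

Section NegbinChernoff.
Variables (R : realFieldType) (p : R).
Hypotheses (p0 : 0 <= p) (p1 : p <= 1).

Lemma sum_negbin_step t : \sum_(j < t.+1) p ^+ j * (1 - p) = 1 - p ^+ t.+1.
Proof. by rewrite -mulr_suml mulrC mul1B_sum_expr. Qed.

(* [(1 - p) / (1 - p z)] is the generating function of the geometric law at
   [z]: the next two lemmas are Markov's inequality for [z ^ X], [X] the sum. *)
Lemma negbin_cdf_mulX_le (z M : R) a t : 0 <= z <= 1 -> 0 <= M ->
  1 - p <= M * (1 - p * z) -> negbin_cdf p a t * z ^+ t <= M ^+ a.
Proof.
move=> /andP [z0 z1] M0 hM; elim: a t => [|a IH] t /=.
  by rewrite mul1r expr0 exprn_ile1.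
have pz0 : 0 <= p * z by exact: mulr_ge0.
rewrite mulr_suml.
apply: (@le_trans _ _ (\sum_(j < t.+1) (1 - p) * (p * z) ^+ j * M ^+ a)).
  apply: ler_sum => j _; have jt : (j <= t)%N by rewrite -ltnS.
  have -> : z ^+ t = z ^+ j * z ^+ (t - j) by rewrite -exprD subnKC.
  have -> : p ^+ j * (1 - p) * negbin_cdf p a (t - j) * (z ^+ j * z ^+ (t - j)) =
      (1 - p) * (p * z) ^+ j * (negbin_cdf p a (t - j) * z ^+ (t - j)).
    by rewrite exprMn; ring.
  by apply: ler_wpM2l; [apply: mulr_ge0; rewrite ?subr_ge0 ?exprn_ge0 | exact: IH].
rewrite -mulr_suml -mulr_sumr exprS; apply: ler_wpM2r; first exact: exprn_ge0.
have hs : 0 <= \sum_(j < t.+1) (p * z) ^+ j by apply: sumr_ge0 => j _; exact: exprn_ge0.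
have := ler_wpM2r hs hM.
rewrite -mulrA mul1B_sum_expr => /le_trans; apply.
by rewrite ler_piMr // gerBl exprn_ge0.
Qed.

Lemma negbin_sf_mulX_le (z M : R) a t : 0 <= z -> 1 <= M ->
  1 - p <= M * (1 - p * z) -> (1 - negbin_cdf p a t) * z ^+ t.+1 <= M ^+ a.
Proof.
move=> z0 M1 hM; elim: a t => [|a IH] t /=; first by rewrite subrr mul0r.
have pz0 : 0 <= p * z by exact: mulr_ge0.
have -> : 1 - \sum_(j < t.+1) p ^+ j * (1 - p) * negbin_cdf p a (t - j) =
    p ^+ t.+1 + \sum_(j < t.+1) p ^+ j * (1 - p) * (1 - negbin_cdf p a (t - j)).
  under [in RHS]eq_bigr do rewrite mulrBr mulr1.
  by rewrite sumrB sum_negbin_step; ring.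
rewrite mulrDl mulr_suml -exprMn.
apply: (@le_trans _ _ ((p * z) ^+ t.+1 + \sum_(j < t.+1) (1 - p) * (p * z) ^+ j * M ^+ a)).
  apply: lerD => //; apply: ler_sum => j _; have jt : (j <= t)%N by rewrite -ltnS.
  have -> : z ^+ t.+1 = z ^+ j * z ^+ (t - j).+1 by rewrite -exprD -subSn // subnKC // ltnW.
  have -> : p ^+ j * (1 - p) * (1 - negbin_cdf p a (t - j)) * (z ^+ j * z ^+ (t - j).+1) =
      (1 - p) * (p * z) ^+ j * ((1 - negbin_cdf p a (t - j)) * z ^+ (t - j).+1).
    by rewrite exprMn; ring.
  by apply: ler_wpM2l; [apply: mulr_ge0; rewrite ?subr_ge0 ?exprn_ge0 | exact: IH].
rewrite -mulr_suml -mulr_sumr [M ^+ a.+1]exprS.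
have hs : 0 <= \sum_(j < t.+1) (p * z) ^+ j by apply: sumr_ge0 => j _; exact: exprn_ge0.
have hsum := ler_wpM2r hs hM; rewrite -mulrA mul1B_sum_expr in hsum.
have Ma : 1 <= M ^+ a by exact: exprn_ege1.
have hy : 0 <= (p * z) ^+ t.+1 by exact: exprn_ge0.
have := ler_wpM2l (le_trans ler01 Ma) hsum.
have : 0 <= (M * M ^+ a - 1) * (p * z) ^+ t.+1.
  by apply: mulr_ge0 => //; rewrite subr_ge0 -[1]mul1r ler_pM.
nra.
Qed.

End NegbinChernoff.

Section ExpBounds.
Variable R : realType.
Implicit Types x u : R.

Lemma inv1B_le_expR x : 0 <= x <= 1 / 2 -> (1 - x)^-1 <= expR (x + 2 * x ^+ 2).
Proof.
move=> /andP [x0 x1]; apply: le_trans (expR_ge1Dx _).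
rewrite -[_^-1]mulr1 ler_pdivrMl; last lra.
have : 0 <= x ^+ 2 * (1 - 2 * x) by apply: mulr_ge0; [exact: sqr_ge0 | lra].
rewrite expr2; nra.
Qed.

Lemma expR_le1D x : 0 <= x <= 1 -> expR (x * (1 - x)) <= 1 + x.
Proof.
move=> /andP [x0 x1]; set y := x * (1 - x).
have y0 : 0 <= y by rewrite /y; apply: mulr_ge0; lra.
have h1 : 1 <= (1 - y) * (1 + x).
  have : 0 <= x * x * x by rewrite !mulr_ge0.
  rewrite /y; nra.
have h2 : expR y * (1 - y) <= 1.
  rewrite -[X in _ <= X](expRxMexpNx_1 y); apply: ler_wpM2l; first exact: ltW (expR_gt0 _).
  by have := expR_ge1Dx (- y); lra.
apply: le_trans (_ : expR y * ((1 - y) * (1 + x)) <= _).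
  by rewrite ler_peMr // ltW // expR_gt0.
by rewrite mulrA -[X in _ <= X]mul1r ler_wpM2r //; lra.
Qed.

Lemma inv1D_le_expRN u : 0 <= u <= 1 -> (1 + u)^-1 <= expR (- (u * (1 - u))).
Proof.
move=> /andP [u0 u1]; apply: le_trans (expR_ge1Dx _).
rewrite -[_^-1]mulr1 ler_pdivrMl; last lra.
have : 0 <= u * u * u by rewrite !mulr_ge0.
nra.
Qed.

Variable p : R.
Hypothesis p01 : 0 < p < 1.

Lemma negbin_sf_le_expR (th : R) a t : 0 <= th <= 1 / 2 ->
  1 - negbin_cdf p a t <=
    expR (a%:R * (th + 2 * th ^+ 2) - t.+1%:R * (th * (1 - p) * (1 - th))).
Proof.
case/andP: p01 => p0 p1 /andP [th0 th1].
set x := th * (1 - p).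
have x0 : 0 <= x by rewrite /x mulr_ge0 //; lra.
have xth : x <= th by rewrite /x; nra.
have M1 : 1 <= (1 - th)^-1 by rewrite invf_ge1; lra.
have hM : 1 - p <= (1 - th)^-1 * (1 - p * (1 + x)).
  rewrite mulrC ler_pdivlMr; last lra.
  have : 0 <= th * (1 - p) * (1 - p) by rewrite !mulr_ge0 //; lra.
  rewrite /x; nra.
have zt0 : 0 < (1 + x) ^+ t.+1 by rewrite exprn_gt0 //; lra.
have := negbin_sf_mulX_le (ltW p0) (ltW p1) a t (ltac:(lra) : 0 <= 1 + x) M1 hM.
rewrite -ler_pdivlMr // => /le_trans; apply.
rewrite expRB !expRM_natl; apply: ler_pM.
- exact: exprn_ge0 (le_trans ler01 M1).
- by rewrite invr_ge0; exact: ltW.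
- apply: lerXn2r; [exact: le_trans M1 | exact: expR_ge0 |].
  by apply: inv1B_le_expR; lra.
- have e0 : 0 < expR (th * (1 - p) * (1 - th)) ^+ t.+1 by exact: exprn_gt0 (expR_gt0 _).
  rewrite lef_pV2 //; apply: lerXn2r; [exact: expR_ge0 | rewrite nnegrE; lra |].
  apply: le_trans (expR_le1D _); last lra.
  by rewrite ler_expR; apply: ler_wpM2l => //; lra.
Qed.

Lemma negbin_cdf_le_expR (th : R) a t : 0 <= th <= 1 / 2 ->
  negbin_cdf p a t <=
    expR (a%:R * - (p * th * (1 - th)) + t%:R * (th * (1 - p) * (1 + 2 * th))).
Proof.
case/andP: p01 => p0 p1 /andP [th0 th1].
set x := th * (1 - p).
have x0 : 0 <= x by rewrite /x mulr_ge0 //; lra.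
have xth : x <= th by rewrite /x; nra.
have pth : 0 <= p * th <= th by apply/andP; split; nra.
have M0 : 0 <= (1 + p * th)^-1 by rewrite invr_ge0; lra.
have hM : 1 - p <= (1 + p * th)^-1 * (1 - p * (1 - x)).
  rewrite mulrC ler_pdivlMr; last lra.
  by rewrite (_ : (1 - p) * (1 + p * th) = 1 - p * (1 - x)) // /x; ring.
have zt0 : 0 < (1 - x) ^+ t by rewrite exprn_gt0 //; lra.
have := negbin_cdf_mulX_le (ltW p0) (ltW p1) a t (ltac:(lra) : 0 <= 1 - x <= 1) M0 hM.
rewrite -ler_pdivlMr // => /le_trans; apply.
rewrite -exprVn expRD !expRM_natl; apply: ler_pM.
- exact: exprn_ge0.
- by rewrite exprn_ge0 // invr_ge0; lra.
- apply: lerXn2r; [exact: M0 | exact: expR_ge0 |].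
  have hu : 0 <= p * th <= 1 by case/andP: pth => pth0 pth1; apply/andP; split; lra.
  apply: (le_trans (inv1D_le_expRN hu)).
  rewrite ler_expR lerN2; apply: ler_wpM2l; first by case/andP: pth.
  by case/andP: pth => pth0 pth1; lra.
- apply: lerXn2r; [rewrite nnegrE invr_ge0; lra | exact: expR_ge0 |].
  have hx : 0 <= x <= 1 / 2 by apply/andP; split; lra.
  apply: (le_trans (inv1B_le_expR hx)); rewrite ler_expR expr2.
  have : 0 <= x * (th - x) by rewrite mulr_ge0 // subr_ge0.
  lra.
Qed.

End ExpBounds.

Section TailChoices.
Variable R : realType.

Lemma negbin_sf_small (p eps b : R) (n a t : nat) :
  0 < p < 1 -> 0 < eps <= 1 -> 0 < b ->
  a%:R <= (1 - eps) * b * n%:R ->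
  (1 - eps / 2) * b * n%:R * (1 - p)^-1 <= t.+1%:R ->
  1 - negbin_cdf p a t <= expR (- (b * (eps / 12) * eps / 4) * n%:R).
Proof.
move=> hp /andP [e0 e1] b0 ha ht; case/andP: (hp) => p0 p1.
set th := eps / 12.
have th0 : 0 <= th <= 1 / 2 by apply/andP; split; rewrite /th; lra.
apply: (le_trans (negbin_sf_le_expR hp a t th0)); rewrite ler_expR.
have c0 : 0 <= th * (1 - p) * (1 - th) by rewrite !mulr_ge0 //; lra.
have hB := ler_wpM2r c0 ht.
have e : (1 - eps / 2) * b * n%:R * (1 - p)^-1 * (th * (1 - p) * (1 - th)) =
    (1 - eps / 2) * b * n%:R * th * (1 - th) by field; lra.
rewrite e in hB.
have hA : a%:R * (th + 2 * th ^+ 2) <= (1 - eps) * b * n%:R * (th + 2 * th ^+ 2).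
  by apply: ler_wpM2r => //; rewrite addr_ge0 ?mulr_ge0 ?sqr_ge0 //; lra.
(* For [th = eps / 12] the exponent undershoots the target by
   [(5 / 24) b n th eps ^ 2]. *)
have key : (1 - eps) * b * n%:R * (th + 2 * th ^+ 2) - (1 - eps / 2) * b * n%:R * th * (1 - th)
    + b * th * eps / 4 * n%:R = - (5 / 24) * (b * n%:R * th * eps ^+ 2) by rewrite /th; field.
have : 0 <= b * n%:R * th * eps ^+ 2 by rewrite !mulr_ge0 ?sqr_ge0 //; lra.
lra.
Qed.

Lemma negbin_cdf_small (p eps b : R) (n a t : nat) :
  0 < p < 1 -> 0 < eps -> 0 < b ->
  1 - eps / (8 * (1 + eps)) <= p ->
  (1 + eps) * b * n%:R <= a%:R ->
  t%:R <= (1 + eps / 2) * b * n%:R * (1 - p)^-1 ->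
  negbin_cdf p a t <= expR (- (b * (eps / (12 * (1 + eps))) * eps / 8) * n%:R).
Proof.
move=> hp e0 b0 hpe ha ht; case/andP: (hp) => p0 p1.
set th := eps / (12 * (1 + eps)).
have th0 : 0 < th by rewrite /th divr_gt0 //; lra.
have th1 : th <= 1 / 12 by rewrite /th ler_pdivrMr; lra.
apply: (le_trans (negbin_cdf_le_expR hp a t (_ : 0 <= th <= 1 / 2))).
  by apply/andP; split; lra.
rewrite ler_expR.
have c0 : 0 <= th * (1 - p) * (1 + 2 * th) by apply: mulr_ge0; [apply: mulr_ge0|]; lra.
have hB := ler_wpM2r c0 ht.
have e : (1 + eps / 2) * b * n%:R * (1 - p)^-1 * (th * (1 - p) * (1 + 2 * th)) =
    (1 + eps / 2) * b * n%:R * th * (1 + 2 * th) by field; lra.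
rewrite e in hB.
have X0 : 0 <= p * th * (1 - th) by apply: mulr_ge0; [apply: mulr_ge0|]; lra.
have hA := ler_wpM2r X0 ha.
have hI : (1 + eps / 2) * (1 + 2 * th) - (1 + eps) * p * (1 - th) + eps / 8 <= 0.
  have : (1 + eps) * (1 - eps / (8 * (1 + eps))) * (1 - th) <= (1 + eps) * p * (1 - th).
    by rewrite -!mulrA ler_wpM2l ?ler_wpM2r //; lra.
  have -> : (1 + eps) * (1 - eps / (8 * (1 + eps))) * (1 - th) =
      (1 + eps / 2) * (1 + 2 * th) + eps / 8 + eps / 12 - th * (1 - eps / 8).
    by rewrite /th; field; lra.
  have : th * (1 + eps) = eps / 12 by rewrite /th; field; lra.
  have : 0 <= th * eps by apply: mulr_ge0; lra.
  lra.
have K0 : 0 <= b * n%:R * th by apply: mulr_ge0; [rewrite mulr_ge0 //; lra | lra].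
have := ler_wpM2l K0 hI; rewrite mulr0.
have -> : b * n%:R * th * ((1 + eps / 2) * (1 + 2 * th) - (1 + eps) * p * (1 - th) + eps / 8) =
    (1 + eps / 2) * b * n%:R * th * (1 + 2 * th) + (1 + eps) * b * n%:R * - (p * th * (1 - th))
    + b * th * eps / 8 * n%:R by ring.
lra.
Qed.

End TailChoices.

(** * Conditional probabilities tending to one *)

Lemma nat_lt_threshold (R : realType) (c : R) : 0 < c ->
  exists t : nat, t%:R <= c /\ forall j : nat, (j%:R < c) = (j <= t)%N.
Proof.
move=> c0; have c0' := ltW c0; case: (eqVneq (Num.truncn c)%:R c) => hc.
  have t1 : (0 < Num.truncn c)%N by rewrite -(ltr_nat R) hc.
  exists (Num.truncn c).-1; split; first by rewrite -[X in _ <= X]hc ler_nat leq_pred.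
  by move=> j; rewrite -[X in _ < X]hc ltr_nat; lia.
exists (Num.truncn c); split; first by rewrite truncn_le.
move=> j; rewrite truncn_ge_nat // lt_neqAle.
by case: eqP => // hj; move: hc; rewrite -hj natrK eqxx.
Qed.

Section Thresholds.
Variables (R : realType) (p : R) (S : aux_setup p) (k : nat).
Local Open Scope ereal_scope.

Lemma auxT_natP w : auxT S k w = +oo \/ exists j : nat, auxT S k w = j%:R%:E.
Proof.
rewrite /auxT; elim: (ps_alive _) => [|x l IH]; first by right; exists 0%N; rewrite big_nil.
rewrite big_cons; case: (rem_lifeP R (fun m => aB x m w) (ps_used (aux_state k w) x)).
  case=> j [_ _ ->]; case: IH => [->|[j' ->]]; first by left.
  by right; exists (j + j')%N; rewrite natrD EFinD.
by move=> ->; left; case: IH => [->|[j' ->]].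
Qed.

Lemma auxT_le_truncn (c : R) : (0 <= c)%R ->
  [set w | auxT S k w <= c%:E] = [set w | auxT S k w <= (Num.truncn c)%:R%:E].
Proof.
move=> c0; apply/seteqP; split => w /=; case: (auxT_natP w) => [->|[j ->]];
  by rewrite ?leye_eq // !lee_fin ler_nat truncn_ge_nat.
Qed.

Lemma auxT_ge_compl (c : R) : (0 < c)%R -> exists t : nat, (t%:R <= c)%R /\
  [set w | c%:E <= auxT S k w] = ~` [set w | auxT S k w <= t%:R%:E].
Proof.
case/nat_lt_threshold => t [tc ht]; exists t; split => //.
apply/seteqP; split => w /=; case: (auxT_natP w) => [->|[j ->]]; rewrite ?leye_eq ?leey //=.
- by rewrite !lee_fin ler_nat -ht => h1 h2; move: h1; rewrite leNgt h2.
- by rewrite !lee_fin ler_nat -ht leNgt => /negP.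
Qed.

End Thresholds.

Lemma expR_lt_eventually (R : realType) (kap d : R) : 0 < kap -> 0 < d ->
  exists N0 : nat, forall n, (N0 <= n)%N -> expR (- kap * n%:R) < d.
Proof.
move=> k0 d0; exists (Num.truncn (1 / (kap * d))).+1 => n hn.
have kd : 0 < kap * d by exact: mulr_gt0.
have : 1 / (kap * d) < n%:R by apply: lt_le_trans (truncnS_gt _) _; rewrite ler_nat.
rewrite ltr_pdivrMr // => hn'.
have := expR_ge1Dx (kap * n%:R).
rewrite mulNr expRN -[X in X < _]div1r ltr_pdivrMr ?expR_gt0 // => h.
have : d * (1 + kap * n%:R) <= d * expR (kap * n%:R) by rewrite ler_pM2l.
lra.
Qed.

Lemma cond_prob_near1 d (T : measurableType d) (R : realType) (P : probability T R)
    (A Bad E : set T) (g dl : R) :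
  measurable A -> measurable (A `&` Bad) -> E `&` A = A `\` Bad ->
  (P (A `&` Bad) <= g%:E * P A)%E -> (0 < P A)%E -> g < dl ->
  `| fine (P (E `&` A)) / fine (P A) - 1 | < dl.
Proof.
move=> mA mB -> hle hpos hd.
have hDI : A `\` (A `&` Bad) = A `\` Bad by rewrite setDIr setDv set0U.
have mD : measurable (A `\` Bad) by rewrite -hDI; exact: measurableD.
have fin X : measurable X -> P X = (fine (P X))%:E.
  by move=> mX; rewrite fineK // fin_num_measure.
have hA : fine (P A) = fine (P (A `\` Bad)) + fine (P (A `&` Bad)).
  have : P A = (P (A `\` Bad) + P (A `&` Bad))%E.
    by have := measureDI P mA mB; rewrite hDI setIA setIid; exact.
  by move=> ->; rewrite fineD ?fin_num_measure.
rewrite (fin A mA) lte_fin in hpos; rewrite (fin _ mB) (fin A mA) -EFinM lee_fin in hle.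
have hB0 : 0 <= fine (P (A `&` Bad)) by rewrite fine_ge0 // measure_ge0.
rewrite (_ : _ / _ - 1 = - (fine (P (A `&` Bad)) / fine (P A))); last first.
  by rewrite hA; field; rewrite -hA gt_eqF.
rewrite normrN ger0_norm; last by rewrite divr_ge0 // ltW.
by apply: le_lt_trans hd; rewrite ler_pdivrMr.
Qed.

Lemma cond_to_one_of_expR_bound (R : realType) (p : nat -> R) (S : forall n, aux_setup (p n))
    (E F : forall n, set (aOmega (S n))) (kap : R) (N1 : nat) :
  0 < kap ->
  (forall n, (N1 <= n)%N -> (0 < aP (S n) (F n))%E -> exists Bad : set (aOmega (S n)),
     [/\ measurable (F n), measurable (F n `&` Bad), E n `&` F n = F n `\` Bad
       & (aP (S n) (F n `&` Bad) <= (expR (- kap * n%:R))%:E * aP (S n) (F n))%E]) ->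
  cond_to_one S E F.
Proof.
move=> k0 hbound dl dl0; have [N0 hN0] := expR_lt_eventually k0 dl0.
exists (maxn N0 N1) => n; rewrite geq_max => /andP [hn0 hn1] hF.
have [Bad [mF mB hE hle]] := hbound n hn1 hF.
exact: cond_prob_near1 mF mB hE hle hF (hN0 n hn0).
Qed.

Section Tails.
Variables (R : realType) (p : nat -> R) (S : forall n, aux_setup (p n)) (k : nat -> nat).
Variables (eps b : R).

Lemma auxT_lower_tail : (forall n, 0 < p n < 1) -> 0 < eps -> 0 < b -> cond_to_one S
  (fun n => [set w | (auxT (S n) (k n) w <= ((1 - eps / 2) * b * n%:R * (1 - p n)^-1)%:E)%E])
  (fun n => [set w | (auxA (S n) (k n) w)%:R <= (1 - eps) * b * n%:R]).
Proof.
move=> hp heps hb.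
apply: (@cond_to_one_of_expR_bound _ _ _ _ _ (b * (eps / 12) * eps / 4) 1).
  by rewrite !mulr_gt0 // ?invr_gt0 //; lra.
move=> n n1 hF; have bn0 : 0 < b * n%:R by rewrite mulr_gt0 // ltr0n.
have e1 : eps <= 1. (* otherwise the conditioning event is empty *)
  rewrite leNgt; apply/negP => e1; move: hF.
  rewrite (_ : [set w | _] = set0) ?measure0 ?ltxx //; apply/seteqP; split => // w /= hw.
  have := ler0n R (auxA (S n) (k n) w); nra.
set c := (1 - eps / 2) * b * n%:R * (1 - p n)^-1.
have c0 : 0 <= c.
  case/andP: (hp n) => _ p1; apply: mulr_ge0; last by rewrite invr_ge0; lra.
  apply: mulr_ge0; last exact: ler0n.
  by apply: mulr_ge0; [lra | exact: ltW].
rewrite (auxT_le_truncn _ _ c0).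
set G := [set w | (auxT _ _ w <= _)%E]; exists (~` G); split.
- exact: (measurable_auxA_pred _ _ (fun a => a%:R <= (1 - eps) * b * n%:R)).
- apply: measurableI; first exact: (measurable_auxA_pred _ _ (fun a => a%:R <= _)).
  apply: measurableC; exact: measurable_auxT_le.
- by rewrite setDE setCK setIC.
- apply: (le_measure_auxA_pred (h := fun a => 1 - negbin_cdf (p n) a (Num.truncn c))
    (Fp := fun a => a%:R <= (1 - eps) * b * n%:R)).
  + exact: ltW (expR_gt0 _).
  + apply: measurableC; exact: measurable_auxT_le.
  + by move=> w0; exact: measure_log_cyl_auxT_gt.
  + move=> a ha; apply: negbin_sf_small => //; first by rewrite heps.
    exact: ltW (truncnS_gt _).
Qed.

Lemma auxT_upper_tail : (forall n, 0 < p n < 1) -> 0 < eps -> 0 < b ->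
  p n @[n --> \oo] --> (1 : R^o) -> cond_to_one S
  (fun n => [set w | (((1 + eps / 2) * b * n%:R * (1 - p n)^-1)%:E <= auxT (S n) (k n) w)%E])
  (fun n => [set w | (1 + eps) * b * n%:R <= (auxA (S n) (k n) w)%:R]).
Proof.
move=> hp heps hb.
have et0 : 0 < eps / (8 * (1 + eps)) by rewrite divr_gt0 //; lra.
move/cvgrPdist_lt => /(_ _ et0) [N1 _ hN1].
apply: (@cond_to_one_of_expR_bound _ _ _ _ _
  (b * (eps / (12 * (1 + eps))) * eps / 8) (maxn N1 1)).
  by rewrite !mulr_gt0 // ?invr_gt0 //; lra.
move=> n; rewrite geq_max => /andP [hn n1] hF.
have {hN1} hN1 := hN1 n hn.
have pclose : 1 - eps / (8 * (1 + eps)) <= p n.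
  by move: hN1; case/andP: (hp n) => _ p1; rewrite /= ger0_norm; lra.
have c0 : 0 < (1 + eps / 2) * b * n%:R * (1 - p n)^-1.
  case/andP: (hp n) => _ p1; apply: mulr_gt0; last by rewrite invr_gt0; lra.
  by apply: mulr_gt0; [apply: mulr_gt0; lra | rewrite ltr0n].
have [t [tc ->]] := auxT_ge_compl (S n) (k n) c0.
set G := [set w | (auxT _ _ w <= _)%E]; exists G; split.
- exact: (measurable_auxA_pred _ _ (fun a => (1 + eps) * b * n%:R <= a%:R)).
- apply: measurableI; last exact: measurable_auxT_le.
  exact: (measurable_auxA_pred _ _ (fun a => _ <= a%:R)).
- by rewrite setDE setIC.
- apply: (le_measure_auxA_pred (h := fun a => negbin_cdf (p n) a t)
    (Fp := fun a => (1 + eps) * b * n%:R <= a%:R)).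
  + exact: ltW (expR_gt0 _).
  + exact: measurable_auxT_le.
  + by move=> w0; case: (measure_log_cyl_auxT_le (k n) w0 t).
  + by move=> a ha; apply: negbin_cdf_small.
Qed.

End Tails.

Theorem lemma2p3 (R : realType) (p : nat -> R)
  (hp : forall n, 0 < p n < 1) (hlim : p n @[n --> \oo] --> (1 : R^o))
  (S : forall n, aux_setup (p n)) (k : nat -> nat)
  (eps b : R) (heps : 0 < eps) (hb : 0 < b) :
  let q := fun n => (1 - p n)^-1 in
  cond_to_one S
    (fun n => [set w | (auxT (S n) (k n) w <= ((1 - eps / 2) * b * n%:R * q n)%:E)%E])
    (fun n => [set w | (auxA (S n) (k n) w)%:R <= (1 - eps) * b * n%:R])
  /\
  cond_to_one S
    (fun n => [set w | (((1 + eps / 2) * b * n%:R * q n)%:E <= auxT (S n) (k n) w)%E])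
    (fun n => [set w | (1 + eps) * b * n%:R <= (auxA (S n) (k n) w)%:R]).
Proof.
by move=> q; split; [exact: auxT_lower_tail | exact: auxT_upper_tail].
Qed.
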